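(* Let $\mathcal{E}_\theta$ ($\theta\in[0,\pi/2]$) be the qubit channel with Kraus operators $E_0=\sqrt{\eta_\theta}\,E$, $E_1=\sqrt{1-\eta_\theta}\,ZE$, where $E=\begin{pmatrix}\cos\theta&\sin\theta\\-\sin\theta&\cos\theta\end{pmatrix}$, $Z=\mathrm{diag}(1,-1)$ and $\eta_\theta\in[0,1]$ is arbitrary. For $n\ge1$ let $E_n$ be the set of $n$-bit strings of even Hamming weight, $w(i)$ the Hamming weight, and $|\Psi_n\rangle=2^{-(n-1)/2}\sum_{i\in E_n}(-1)^{w(i)/2}|i\rangle$. Apply $\mathcal{E}_\theta^{\otimes n}$ to $|\Psi_n\rangle\langle\Psi_n|$ and measure all $n$ qubits in the computational basis. Then the probability that the outcome string has even parity is exactly $\cos^2(n\theta)$. *)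

From HB Require Import structures.
From mathcomp Require Import all_boot all_order all_algebra.
From mathcomp Require Import all_classical all_reals all_analysis.
Set Implicit Arguments. Unset Strict Implicit. Unset Printing Implicit Defensive.
Import Order.TTheory GRing.Theory Num.Theory.
Local Open Scope ring_scope.

(* n-bit strings: bit j of string i is (i j); false = |0>, true = |1>. *)
Definition bits (n : nat) := {ffun 'I_n -> bool}.

Definition hw (n : nat) (i : bits n) : nat := (\sum_(j < n) (i j : nat))%N.

Section Q.
Variable R : realType.

Definition Emat (t : R) (r c : bool) : R :=
  match r, c with
  | false, false => cos t
  | false, true => sin t
  | true, false => - sin t
  | true, true => cos t
  end.

(* Z = diag(1,-1); (Z E)_{r c} = (-1)^r E_{r c}. *)
Definition ZEmat (t : R) (r c : bool) : R := (-1) ^+ r * Emat t r c.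

Definition kraus (t eta : R) (k : bool) (r c : bool) : R :=
  if k then Num.sqrt (1 - eta) * ZEmat t r c else Num.sqrt eta * Emat t r c.

Definition krausN (n : nat) (t eta : R) (k : bits n) (x i : bits n) : R :=
  \prod_(j < n) kraus t eta (k j) (x j) (i j).

Definition psi (n : nat) (i : bits n) : R :=
  if ~~ odd (hw i) then (Num.sqrt 2 ^+ n.-1)^-1 * (-1) ^+ (hw i)./2 else 0.

(* rho = |Psi_n><Psi_n| (real amplitudes) *)
Definition rho (n : nat) (x y : bits n) : R := psi x * psi y.

(* Output of the channel E_t^{(x)n}: sum_k K_k rho K_k^dagger
   (all entries are real, so dagger = transpose). *)
Definition chan_out (n : nat) (t eta : R) (x y : bits n) : R :=
  \sum_(k : bits n) \sum_(i : bits n) \sum_(l : bits n)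
     krausN t eta k x i * rho i l * krausN t eta k y l.

Definition prob_even (n : nat) (t eta : R) : R :=
  \sum_(x : bits n | ~~ odd (hw x)) chan_out t eta x x.

End Q.

(* The amplitudes of |Psi_n> are, up to the factor 2^{-(n-1)/2}, the real parts
   Re(i^{w(x)}) = (i^{w(x)} + (-i)^{w(x)}) / 2, i.e. half the sum of the product
   vectors (1, i)^{(x)n} and (1, -i)^{(x)n}.  Since (1, +-i) are eigenvectors of E
   with eigenvalues e^{+-i theta}, the x-amplitude of E^{(x)n}|Psi_n> is
   2^{-(n-1)/2} (-1)^{w(x)/2} cos(n theta) for x of even weight.  Every tensor
   Kraus operator is E^{(x)n} premultiplied by a diagonal matrix whose squared
   entries sum to eta + (1 - eta) = 1 over the Kraus index, so the x-th diagonal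
   entry of the output is the square of that amplitude, and the 2^{n-1} even
   strings sum to cos^2(n theta). *)

From HB Require Import structures.
From mathcomp Require Import all_boot all_order all_algebra.
From mathcomp Require Import all_classical all_reals all_analysis.
From mathcomp Require Import complex ring.
Set Implicit Arguments. Unset Strict Implicit. Unset Printing Implicit Defensive.
Import Order.TTheory GRing.Theory Num.Theory.
Local Open Scope ring_scope.

Section HammingWeightPowers.
Variable C : comNzRingType.

Lemma expr_hw (u : C) n (i : bits n) : u ^+ hw i = \prod_(j < n) u ^+ i j.
Proof. by rewrite /hw expr_sum. Qed.

Lemma sum_expr_hw n (u : C) : \sum_(i : bits n) u ^+ hw i = (1 + u) ^+ n.
Proof.
under eq_bigr do rewrite expr_hw.
rewrite -(bigA_distr_bigA (R := C) (fun (j : 'I_n) (b : bool) => u ^+ b)) /=.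
by rewrite big_bool /= expr0 expr1 addrC prodr_const card_ord.
Qed.

Lemma sum_tensor_eigen n (M : bool -> bool -> C) (z u : C) :
    (forall r, \sum_(b : bool) M r b * u ^+ b = z * u ^+ r) -> forall x : bits n,
  \sum_(i : bits n) (\prod_(j < n) M (x j) (i j)) * u ^+ hw i = z ^+ n * u ^+ hw x.
Proof.
move=> Meigen x.
under eq_bigr do rewrite expr_hw -big_split.
rewrite -(bigA_distr_bigA (R := C) (fun j b => M (x j) b * u ^+ b)) /=.
under eq_bigr do rewrite Meigen.
by rewrite big_split /= prodr_const card_ord -expr_hw.
Qed.

End HammingWeightPowers.

Section SqrtN1.
Variable C : comNzRingType.

Lemma sqrtN1_exprn (u : C) : u ^+ 2 = -1 ->
  forall w, u ^+ w = u ^+ odd w * (-1) ^+ w./2.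
Proof. by move=> u2 w; rewrite -{1}(odd_double_half w) exprD -mul2n exprM u2. Qed.

Lemma sqrtN1_expr_addN (u : C) w : u ^+ 2 = -1 ->
  u ^+ w + (- u) ^+ w = if odd w then 0 else 2 * (-1) ^+ w./2.
Proof.
move=> u2; rewrite [(- u) ^+ w]exprNn -signr_odd (sqrtN1_exprn u2).
by case: (odd w); rewrite ?expr1 ?expr0 ?mulN1r ?subrr // !mul1r mulr2n mulrDl mul1r.
Qed.

Lemma addr_conj (u a b : C) : (a + u * b) + (a + - u * b) = 2 * a.
Proof. by ring. Qed.

Lemma sqrtN1_mul (u a b c d : C) : u ^+ 2 = -1 ->
  (a + u * b) * (c + u * d) = (a * c - b * d) + u * (a * d + b * c).
Proof.
move=> u2.
have -> : (a + u * b) * (c + u * d) = a * c + u ^+ 2 * (b * d) + u * (a * d + b * c).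
  by ring.
by rewrite u2 mulN1r.
Qed.

End SqrtN1.

Local Open Scope complex_scope.

Section RotationEigenvectors.
Variables (R : realType) (u : R[i]).
Hypothesis u2 : u ^+ 2 = -1.

Local Notation rot t := ((cos t)%:C + u * (sin t)%:C).

Lemma Emat_eigen (t : R) r :
  \sum_(b : bool) (Emat t r b)%:C * u ^+ b = rot t * u ^+ r.
Proof.
rewrite big_bool /= expr1 expr0 mulr1.
case: r; rewrite /= ?expr1 ?expr0 ?mulr1; last by rewrite addrC mulrC.
by rewrite mulrDl mulrAC -expr2 u2 rmorphN /=; ring.
Qed.

Lemma rot_exprn (t : R) k : rot t ^+ k = rot (k%:R * t).
Proof.
elim: k => [|k IHk]; first by rewrite expr0 mul0r cos0 sin0 mulr0 addr0.
rewrite exprS IHk sqrtN1_mul // -natr1 mulrDl mul1r cosD sinD.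
by rewrite rmorphB rmorphD !rmorphM; ring.
Qed.

Lemma sum_tensor_Emat_eigen n (t : R) (x : bits n) :
  \sum_(i : bits n) (\prod_(j < n) Emat t (x j) (i j))%:C * u ^+ hw i =
  rot (n%:R * t) * u ^+ hw x.
Proof.
under eq_bigr do rewrite rmorph_prod.
by rewrite (sum_tensor_eigen (Emat_eigen t)) rot_exprn.
Qed.

End RotationEigenvectors.

Section TensorAmplitude.
Variable R : realType.

Local Notation psi_scale n := (Num.sqrt 2 ^+ n.-1)^-1.

Lemma psiE n (i : bits n) :
  psi R i = psi_scale n * (if odd (hw i) then 0 else (-1) ^+ (hw i)./2).
Proof. by rewrite /psi; case: (odd (hw i)); rewrite ?mulr0. Qed.

Lemma sign_sqrtN1 (u : R[i]) : u ^+ 2 = -1 -> forall w,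
  2 * (if odd w then 0 else (-1) ^+ w./2 : R)%:C = u ^+ w + (- u) ^+ w.
Proof.
move=> u2 w; rewrite sqrtN1_expr_addN //.
by case: (odd w); rewrite /= ?mulr0 // rmorphXn rmorphN1.
Qed.

Lemma tensor_Emat_psi n (t : R) (x : bits n) : ~~ odd (hw x) ->
  \sum_(i : bits n) (\prod_(j < n) Emat t (x j) (i j)) * psi R i =
  psi_scale n * (-1) ^+ (hw x)./2 * cos (n%:R * t).
Proof.
move=> even_x; under eq_bigr do rewrite psiE mulrCA.
rewrite -mulr_sumr -mulrA; congr (_ * _).
apply: (@mulfI _ 2); first by rewrite pnatr_eq0.
apply: complexI; rewrite !rmorphM rmorph_nat rmorph_sum mulr_sumr /=.
under eq_bigr do rewrite rmorphM mulrCA (sign_sqrtN1 (@sqr_i R)) mulrDr.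
have ni2 : (- 'i) ^+ 2 = -1 :> R[i] by rewrite sqrrN sqr_i.
rewrite big_split /= (sum_tensor_Emat_eigen (@sqr_i R)) (sum_tensor_Emat_eigen ni2).
rewrite (sqrtN1_exprn ni2) (sqrtN1_exprn (@sqr_i R)) (negbTE even_x) expr0 !mul1r.
by rewrite rmorphXn rmorphN1 -mulrDl addr_conj -mulrA [_%:C * _]mulrC.
Qed.

End TensorAmplitude.

Section KrausFactorization.
Variables (R : realType) (t eta : R).

Definition kraus_weight (k r : bool) : R :=
  if k then Num.sqrt (1 - eta) * (-1) ^+ r else Num.sqrt eta.

Lemma kraus_factor k r c : kraus t eta k r c = kraus_weight k r * Emat t r c.
Proof. by rewrite /kraus /kraus_weight /ZEmat; case: k; rewrite ?mulrA. Qed.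

Lemma krausN_factor n (k x i : bits n) :
  krausN t eta k x i =
  (\prod_(j < n) kraus_weight (k j) (x j)) * \prod_(j < n) Emat t (x j) (i j).
Proof. by rewrite /krausN -big_split; apply: eq_bigr => j _; rewrite kraus_factor. Qed.

Hypotheses (eta_ge0 : 0 <= eta) (eta_le1 : eta <= 1).

Lemma sum_kraus_weight2 r : \sum_(k : bool) kraus_weight k r ^+ 2 = 1.
Proof.
rewrite big_bool /= exprMn sqrr_sign !sqr_sqrtr ?subr_ge0 //.
by rewrite mulr1 subrK.
Qed.

Lemma sum_krausN_weight2 n (x : bits n) :
  \sum_(k : bits n) (\prod_(j < n) kraus_weight (k j) (x j)) ^+ 2 = 1.
Proof.
under eq_bigr do rewrite -prodrXl.
rewrite -(bigA_distr_bigA (R := R) (fun j b => kraus_weight b (x j) ^+ 2)) /=.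
by apply: big1 => j _; rewrite sum_kraus_weight2.
Qed.

Lemma chan_out_diag n (x : bits n) :
  chan_out t eta x x =
  (\sum_(i : bits n) (\prod_(j < n) Emat t (x j) (i j)) * psi R i) ^+ 2.
Proof.
set S := \sum_(i : bits n) _.
rewrite -[RHS]mul1r -(sum_krausN_weight2 x) big_distrl /= /chan_out /S.
apply: eq_bigr => k _; rewrite -exprMn mulr_sumr expr2 mulr_suml.
apply: eq_bigr => i _; rewrite mulr_sumr; apply: eq_bigr => l _.
by rewrite !krausN_factor /rho; ring.
Qed.

End KrausFactorization.

Lemma sum1_even_hw (R : numDomainType) n : (0 < n)%N ->
  \sum_(x : bits n | ~~ odd (hw x)) (1 : R) = 2 ^+ n.-1.
Proof.
case: n => // n _; apply: (@mulfI _ 2); first by rewrite pnatr_eq0.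
have -> : 2 * \sum_(x : bits n.+1 | ~~ odd (hw x)) (1 : R) =
    \sum_(x : bits n.+1) 1 ^+ hw x + \sum_(x : bits n.+1) (-1) ^+ hw x.
  rewrite -big_split mulr_sumr big_mkcond /=; apply: eq_bigr => x _.
  by rewrite expr1n -signr_odd; case: (odd (hw x)); rewrite ?subrr ?mulr1.
by rewrite !sum_expr_hw subrr expr0n addr0 -exprS.
Qed.

Theorem mainTheorem4 (R : realType) (n : nat) (theta eta : R) :
  (1 <= n)%N -> 0 <= theta -> theta <= pi / 2 -> 0 <= eta -> eta <= 1 ->
  @prob_even R n theta eta = cos (n%:R * theta) ^+ 2.
Proof.
(* The identity holds for every theta. *)
move=> n_gt0 _ _ eta_ge0 eta_le1; rewrite /prob_even.
under eq_bigr => x even_x do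
  rewrite chan_out_diag // tensor_Emat_psi // !exprMn sqrr_sign mulr1.
rewrite -big_distrl /=; under eq_bigr do rewrite -[_ ^+ 2]mulr1.
rewrite -mulr_sumr sum1_even_hw // exprVn -exprM mulnC exprM sqr_sqrtr ?ler0n //.
by rewrite mulVf ?mul1r // expf_neq0 // pnatr_eq0.
Qed.
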